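(* Let $X$ be a complex Banach space, $T$ a bounded linear operator on $X$, and $x_0\in X$ a convex-cyclic vector for $T$. Let $\varepsilon>0$ and $N_0\in\mathbb{N}$. Then for every $x\in X$ there is a convex polynomial $P_k(t)=a_0+a_1t+\cdots+a_kt^k$ with $a_k>0$ and $k>N_0$ such that $\Vert P_k(T)(x_0)-x\Vert<\varepsilon$.
   Context: A convex polynomial is a polynomial $\sum_{i=0}^k a_it^i$ with $a_i\ge 0$ and $\sum_i a_i=1$. A vector $x_0$ is convex-cyclic for $T$ if the convex hull of $\{T^n x_0:n\ge 0\}$, i.e. $\{P(T)x_0: P \text{ a convex polynomial}\}$, is dense in $X$. *)

From HB Require Import structures.
From mathcomp Require Import all_boot all_order all_algebra.
From mathcomp Require Export complex.
From mathcomp Require Import all_classical all_reals all_analysis.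
Set Implicit Arguments. Unset Strict Implicit. Unset Printing Implicit Defensive.
Import Order.TTheory GRing.Theory Num.Theory.
Import numFieldNormedType.Exports.
Local Open Scope ring_scope.
Local Open Scope classical_set_scope.

Definition bounded_operator (R : realType) (V : normedModType R[i])
  (T : {linear V -> V}) : Prop :=
  exists M : R, forall x : V, `|T x| <= (M%:C)%C * `|x|.

Definition convex_coefs (R : realType) (k : nat) (a : nat -> R) : Prop :=
  (forall i, (i <= k)%N -> 0 <= a i) /\ \sum_(i < k.+1) a i = 1.

Definition poly_apply (R : realType) (V : normedModType R[i]) (T : V -> V)
  (k : nat) (a : nat -> R) (x : V) : V :=
  \sum_(i < k.+1) ((a i)%:C)%C *: iter i T x.

Definition convex_cyclic (R : realType) (V : normedModType R[i]) (T : V -> V)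
  (x0 : V) : Prop :=
  closure [set y | exists k (a : nat -> R), convex_coefs k a /\ y = poly_apply T k a x0]
  = setT.

From mathcomp Require Import all_boot all_order all_algebra.
From mathcomp Require Import complex.
From mathcomp Require Import all_classical all_reals all_analysis.
Set Implicit Arguments. Unset Strict Implicit. Unset Printing Implicit Defensive.
Import Order.TTheory GRing.Theory Num.Theory.
Import numFieldNormedType.Exports.
Local Open Scope ring_scope.

(* Approximate x within eps/2 by P(T) x0 with P convex of degree m, then pass to
   (1 - d) P + d t^k for any k > max(m, N0): the new polynomial is convex with
   leading coefficient d > 0, and it moves P(T) x0 by d ||T^k x0 - P(T) x0||,
   which is below eps/2 once d is small enough. *)

Lemma sum_ord_truncate (M : zmodType) (F : nat -> M) (m k : nat) : (m < k)%N ->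
  \sum_(i < k) (if (i <= m)%N then F i else 0) = \sum_(i < m.+1) F i.
Proof. by move=> mk; rewrite (big_ord_widen k F mk) big_mkcond [RHS]big_mkcond. Qed.

Section ConvexPolynomials.
Variable R : realType.

Definition mix_power (m k : nat) (d : R) (a : nat -> R) : nat -> R :=
  fun i => if i == k then d else if (i <= m)%N then (1 - d) * a i else 0.

Lemma convex_coefs_mix_power (m k : nat) (d : R) (a : nat -> R) :
  (m < k)%N -> 0 <= d <= 1 -> convex_coefs m a -> convex_coefs k (mix_power m k d a).
Proof.
move=> mk /andP[d0 d1] [a0 a1]; split.
  move=> i _; rewrite /mix_power; case: eqP => // _; case: ifP => // im.
  by rewrite mulr_ge0 ?subr_ge0 ?a0.
rewrite big_ord_recr /= /mix_power eqxx.
under eq_bigr => i _ do rewrite ltn_eqF //.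
by rewrite (sum_ord_truncate (fun i => (1 - d) * a i) mk) -mulr_sumr a1 mulr1 subrK.
Qed.

Lemma poly_apply_mix_power (V : normedModType R[i]) (T : V -> V)
    (m k : nat) (d : R) (a : nat -> R) (x0 : V) : (m < k)%N ->
  poly_apply T k (mix_power m k d a) x0
  = ((1 - d)%:C)%C *: poly_apply T m a x0 + (d%:C)%C *: iter k T x0.
Proof.
move=> mk; rewrite /poly_apply big_ord_recr /= /mix_power eqxx; congr (_ + _).
rewrite scaler_sumr.
rewrite -(sum_ord_truncate (fun i => ((1 - d)%:C)%C *: (((a i)%:C)%C *: iter i T x0)) mk).
apply: eq_bigr => i _.
by rewrite ltn_eqF //; case: ifP => _; rewrite ?scale0r // rmorphM scalerA.
Qed.

Lemma norm_mix_sub_le (V : normedModType R[i]) (d : R) (y z x : V) : 0 <= d ->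
  `|((1 - d)%:C)%C *: y + (d%:C)%C *: z - x| <= `|y - x| + (d%:C)%C * `|z - y|.
Proof.
move=> d0; have -> : ((1 - d)%:C)%C *: y + (d%:C)%C *: z = y + (d%:C)%C *: (z - y).
  by rewrite rmorphB /= scalerBl scale1r scalerBr addrA addrAC.
rewrite addrAC.
by apply: le_trans (ler_normD _ _) _; rewrite normrZ ger0_norm ?ler0c.
Qed.

Lemma exists_small_weight (c : R[i]) (e : R) : 0 <= c -> 0 < e ->
  exists d : R, [/\ 0 < d, d <= 1 & (d%:C)%C * c < (e%:C)%C].
Proof.
move=> c0 e0; have [r r0 ->] : exists2 r : R, 0 <= r & c = (r%:C)%C.
  by exists (complex.Re c); rewrite -?ler0c RRe_real ?ger0_real.
have re0 : 0 < r + e by rewrite ltr_wpDl.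
exists (e / (r + e)); split.
- by rewrite divr_gt0.
- by rewrite ler_pdivrMr ?mul1r ?lerDr.
- by rewrite -rmorphM ltcR mulrAC ltr_pdivrMr // ltr_pM2l // ltrDl.
Qed.

Lemma convex_cyclic_approx (V : normedModType R[i]) (T : V -> V) (x0 x : V) (e : R) :
  convex_cyclic T x0 -> 0 < e ->
  exists m (a : nat -> R), convex_coefs m a /\ `|poly_apply T m a x0 - x| < (e%:C)%C.
Proof.
move=> cyc e0; have eC0 : 0 < ((e%:C)%C : R[i]) by rewrite ltcR.
have : closure [set y | exists m (a : nat -> R),
    convex_coefs m a /\ y = poly_apply T m a x0] x by rewrite cyc.
move=> /(_ _ (nbhsx_ballx x _ eC0)) [_ [[m [a [Ha ->]]]]].
by rewrite -ball_normE /= distrC; exists m, a.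
Qed.

End ConvexPolynomials.

Theorem lemma2p2 (R : realType) (V : completeNormedModType R[i])
  (T : {linear V -> V}) (x0 : V) (eps : R) (N0 : nat) :
  bounded_operator T ->
  convex_cyclic T x0 ->
  0 < eps ->
  forall x : V, exists (k : nat) (a : nat -> R),
    convex_coefs k a /\ 0 < a k /\ (N0 < k)%N /\
    `|poly_apply T k a x0 - x| < ((eps%:C)%C : R[i]).
Proof.
move=> _ cyc eps0 x; have eps20 : 0 < eps / 2 by rewrite divr_gt0.
have [m [a [Ha Hy]]] := convex_cyclic_approx x cyc eps20.
set y := poly_apply T m a x0 in Hy; set k := (m + N0).+1.
have mk : (m < k)%N by rewrite ltnS leq_addr.
have [d [d0 d1 Hd]] := exists_small_weight (normr_ge0 (iter k T x0 - y)) eps20.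
exists k, (mix_power m k d a); split; last split; last split.
- by apply: convex_coefs_mix_power => //; rewrite (ltW d0) d1.
- by rewrite /mix_power eqxx.
- by rewrite ltnS leq_addl.
rewrite poly_apply_mix_power //; apply: le_lt_trans (norm_mix_sub_le _ _ _ (ltW d0)) _.
by move: (ltrD Hy Hd); rewrite -rmorphD -splitr.
Qed.
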